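(* Let $C_{\mathsf{Bern}}>0$. There exist constants $c>0$ and $N_0$, depending only on $C_{\mathsf{Bern}}$, such that for every $n\ge N_0$ and every function $f\colon\{0,1\}^n\to\mathbb R$ satisfying \[\sup_{p\in[0,1]}\mathbb E_{X\sim\mathrm{Bern}(p)^{\otimes n}}|f(X)-p|\le\frac{C_{\mathsf{Bern}}}{\sqrt n},\] and every $\eta\in(0,1)$ with $\lfloor\eta n\rfloor\ge1$, we have \[\sup_{p\in[0,1]}\mathbb E_{X\sim\mathrm{Bern}(p)^{\otimes n}}[S^f_\eta(X)]\ge c\,\eta.\]
   Context: For $x,y\in\{0,1\}^n$, $d_H(x,y)=\#\{i: x_i\ne y_i\}$. For $f\colon\{0,1\}^n\to\mathbb R$ and $\eta\in(0,1)$, $S^f_\eta(x)=\sup_{y\in\{0,1\}^n\colon d_H(x,y)\le\lfloor\eta n\rfloor}|f(y)-f(x)|$. *)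

From HB Require Import structures.
From mathcomp Require Import all_boot all_order all_algebra.
From mathcomp Require Import classical_sets reals.
Set Implicit Arguments. Unset Strict Implicit. Unset Printing Implicit Defensive.
Import Order.TTheory GRing.Theory Num.Theory.
Local Open Scope ring_scope.

(* The hypercube {0,1}^n, encoded as functions 'I_n -> bool (true = 1). *)
Notation cube n := {ffun 'I_n -> bool}.

Definition dH (n : nat) (x y : cube n) : nat := #|[pred i | x i != y i]|.

Definition bern_mass {R : realType} (n : nat) (p : R) (x : cube n) : R :=
  \prod_(i < n) (if x i then p else 1 - p).

Definition bern_exp {R : realType} (n : nat) (p : R) (g : cube n -> R) : R :=
  \sum_(x : cube n) bern_mass p x * g x.

Definition sup_bern {R : realType} (n : nat) (g : R -> cube n -> R) : R :=
  sup [set bern_exp p (g p) | p in [set p : R | 0 <= p <= 1]]%classic.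

(* S^f_eta(x) = sup_{y : dH x y <= floor(eta n)} |f y - f x|, a finite max
   over a nonempty set (contains x) of nonnegative reals, so 0 is a neutral
   default. *)
Definition Sens {R : realType} (n : nat) (f : cube n -> R) (eta : R) (x : cube n) : R :=
  \big[Num.max/0]_(y : cube n | (dH x y)%:Z <= Num.floor (eta * n%:R))
     `|f y - f x|.

From HB Require Import structures.
From mathcomp Require Import classical_sets reals.
From mathcomp Require Import all_boot all_order all_algebra.
From mathcomp Require Import zify ring lra polyrcf.
Import Order.TTheory GRing.Theory Num.Theory.
Local Open Scope ring_scope.
Set Implicit Arguments. Unset Strict Implicit. Unset Printing Implicit Defensive.

(* Only the biases p = 0 and p = 1 of the hypothesis are used: they force
   f(1...1) - f(0...0) >= 1/2.  Let m = floor(eta n), and let F_k, A_k be the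
   averages of f and of S = S^f_eta over the k-th level of the cube.  Double
   counting the pairs X <= Y with |X| = k and |Y| = k' <= k + m gives
   |F_k' - F_k| <= A_k, and m overlapping chains of window m from level 0 to
   level n give m (F_n - F_0) <= sum_k A_k + m A_0.  Since
   E_p[S] = sum_k A_k B_{n,k}(p) and each Bernstein polynomial B_{n,k} has
   integral 1/(n+1) over [0,1], sum_k A_k <= (n+1) sup_p E_p[S], whence
   m/2 <= (n+1+m) sup_p E_p[S]. *)

Lemma mul_bin_bin n k k' : (k <= k' <= n)%N ->
  ('C(n, k') * 'C(k', k) = 'C(n, k) * 'C(n - k, k' - k))%N.
Proof.
move=> /andP[le_kk' le_k'n].
have facts_gt0 : (0 < k`! * (k' - k)`! * (n - k')`!)%N by rewrite !muln_gt0 !fact_gt0.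
apply/eqP; rewrite -(eqn_pmul2r facts_gt0); apply/eqP.
transitivity (n`!).
  rewrite -(bin_fact le_k'n) -(bin_fact le_kk').
  move: 'C(n, k') 'C(k', k) k`! (k' - k)`! (n - k')`! => a b c d e; ring.
have le_diff : (k' - k <= n - k)%N by lia.
have -> : (n - k' = n - k - (k' - k))%N by lia.
rewrite -(bin_fact (leq_trans le_kk' le_k'n)) -(bin_fact le_diff).
move: 'C(n, k) 'C(n - k, k' - k) k`! (k' - k)`! (n - k - (k' - k))`! => a b c d e; ring.
Qed.

Section Subsets.
Variables (R : nmodType) (n : nat).
Implicit Types (X Y : {set 'I_n}) (c : R).

Lemma card_set_ord X : (#|X| <= n)%N.
Proof. by rewrite -[n in (_ <= n)%N]card_ord max_card. Qed.

Lemma sum_const_subsets Y k c :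
  \sum_(X : {set 'I_n} | (X \subset Y) && (#|X| == k)) c = c *+ 'C(#|Y|, k).
Proof.
rewrite sumr_const -cards_draws; congr (_ *+ _).
by apply: eq_card => X; rewrite inE.
Qed.

Lemma sum_const_supsets X k c : (#|X| <= k <= n)%N ->
  \sum_(Y : {set 'I_n} | (X \subset Y) && (#|Y| == k)) c = c *+ 'C(n - #|X|, k - #|X|).
Proof.
move=> /andP[le_Xk le_kn].
rewrite (reindex_inj (inv_inj (@setCK _))) /=.
rewrite (eq_bigl (fun Z : {set 'I_n} => (Z \subset ~: X) && (#|Z| == n - k)%N)); last first.
  move=> Z; rewrite subsetC [#|~: Z|]cardsCs setCK card_ord.
  by congr andb; apply/eqP/eqP => [<- | ->]; rewrite subKn ?card_set_ord.
rewrite sum_const_subsets cardsCs setCK card_ord -bin_sub ?leq_sub2l //.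
by congr (_ *+ 'C(_, _)); move: #|X| le_Xk => x; lia.
Qed.

End Subsets.

Section CubeOfSet.
Variable n : nat.
Implicit Types X Y : {set 'I_n}.

Definition cube_of_set X : cube n := [ffun i => i \in X].

Lemma cube_of_set_bij : bijective cube_of_set.
Proof.
exists (fun x : cube n => [set i | x i]) => [X | x].
  by apply/setP => i; rewrite inE ffunE.
by apply/ffunP => i; rewrite ffunE inE.
Qed.

Lemma cube_of_set0 : cube_of_set set0 = [ffun=> false].
Proof. by apply/ffunP => i; rewrite !ffunE inE. Qed.

Lemma cube_of_setT : cube_of_set setT = [ffun=> true].
Proof. by apply/ffunP => i; rewrite !ffunE inE. Qed.

Lemma dH_cube_of_set X Y : X \subset Y ->
  dH (cube_of_set X) (cube_of_set Y) = (#|Y| - #|X|)%N.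
Proof.
move=> sXY; rewrite /dH -cardsDS //; apply: eq_card => i; rewrite !inE !ffunE.
by case: (boolP (i \in X)) => [/(subsetP sXY) -> | _]; case: (i \in Y).
Qed.

Lemma dH_refl (x : cube n) : dH x x = 0%N.
Proof. by apply: eq_card0 => i; rewrite !inE eqxx. Qed.

End CubeOfSet.

Arguments cube_of_set {n}.

Section Levels.
Variables (R : fieldType) (n : nat).
Implicit Types g : {set 'I_n} -> R.

Definition level_sum g k := \sum_(X : {set 'I_n} | #|X| == k) g X.
Definition level_avg g k := level_sum g k / ('C(n, k))%:R.

Lemma sum_by_level g : \sum_(X : {set 'I_n}) g X = \sum_(k < n.+1) level_sum g k.
Proof.
rewrite (partition_big (fun X : {set 'I_n} => inord #|X| : 'I_n.+1) xpredT) //=.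
apply: eq_bigr => k _; apply: eq_bigl => X.
have ltXn : (#|X| < n.+1)%N by rewrite ltnS card_set_ord.
by apply/eqP/eqP => [<- | ->]; [rewrite inordK | apply: val_inj; rewrite /= inordK].
Qed.

Lemma level_avg0 g : level_avg g 0 = g set0.
Proof.
rewrite /level_avg bin0 divr1 /level_sum (eq_bigl (pred1 set0)) ?big_pred1_eq //.
by move=> X; rewrite cards_eq0.
Qed.

Lemma level_avgn g : level_avg g n = g setT.
Proof.
rewrite /level_avg binn divr1 /level_sum (eq_bigl (pred1 setT)) ?big_pred1_eq //.
by move=> X /=; rewrite eqEcard subsetT cardsT card_ord eqn_leq card_set_ord.
Qed.

End Levels.

Section LevelStep.
Variables (R : numFieldType) (n m : nat) (f S : {set 'I_n} -> R).
Hypothesis f_step : forall X Y : {set 'I_n},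
  X \subset Y -> (#|Y| - #|X| <= m)%N -> `|f Y - f X| <= S X.

Definition pair_sum (h : {set 'I_n} -> {set 'I_n} -> R) k k' :=
  \sum_(X : {set 'I_n} | #|X| == k)
    \sum_(Y : {set 'I_n} | (X \subset Y) && (#|Y| == k')) h X Y.

Lemma pair_sum_lower (g : {set 'I_n} -> R) k k' : (k <= k' <= n)%N ->
  pair_sum (fun X _ => g X) k k' = ('C(n - k, k' - k))%:R * level_sum g k.
Proof.
move=> lekk'n; rewrite /pair_sum /level_sum mulr_sumr.
apply: eq_bigr => X /eqP cardX.
by rewrite sum_const_supsets ?mulr_natl cardX.
Qed.

Lemma pair_sum_upper (g : {set 'I_n} -> R) k k' :
  pair_sum (fun _ Y => g Y) k k' = ('C(k', k))%:R * level_sum g k'.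
Proof.
rewrite /pair_sum (exchange_big_dep (fun Y : {set 'I_n} => #|Y| == k')) /=; last first.
  by move=> X Y _ /andP[].
rewrite /level_sum mulr_sumr; apply: eq_bigr => Y /eqP cardY.
rewrite (eq_bigl (fun X : {set 'I_n} => (X \subset Y) && (#|X| == k))).
  by rewrite sum_const_subsets mulr_natl cardY.
by move=> X; rewrite cardY eqxx andbT andbC.
Qed.

Lemma level_avg_step k k' : (k <= k' <= n)%N -> (k' - k <= m)%N ->
  `|level_avg f k' - level_avg f k| <= level_avg S k.
Proof.
move=> lekk'n window; have /andP[le_kk' le_k'n] := lekk'n.
set a := ('C(n, k))%:R : R; set b := ('C(n - k, k' - k))%:R : R.
set c := ('C(n, k'))%:R : R; set d := ('C(k', k))%:R : R.
have a_gt0 : 0 < a by rewrite ltr0n bin_gt0 (leq_trans le_kk').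
have b_gt0 : 0 < b by rewrite ltr0n bin_gt0 leq_sub2r.
have c_gt0 : 0 < c by rewrite ltr0n bin_gt0.
have d_gt0 : 0 < d by rewrite ltr0n bin_gt0.
have cd_ab : c * d = a * b by rewrite -!natrM mul_bin_bin.
have chain_le : `|d * level_sum f k' - b * level_sum f k| <= b * level_sum S k.
  rewrite -pair_sum_upper -!pair_sum_lower // /pair_sum -sumrB.
  apply: le_trans (ler_norm_sum _ _ _) _; apply: ler_sum => X /eqP cardX.
  rewrite -sumrB; apply: le_trans (ler_norm_sum _ _ _) _.
  apply: ler_sum => Y /andP[sXY /eqP cardY].
  by apply: f_step; rewrite // cardX cardY.
have -> : level_avg f k' - level_avg f k =
    (d * level_sum f k' - b * level_sum f k) / (a * b).
  rewrite /level_avg -/a -/c.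
  have -> : level_sum f k' / c = d * level_sum f k' / (a * b).
    by rewrite -cd_ab; field; rewrite ?gt_eqF.
  by rewrite mulrBl; congr (_ - _); field; rewrite ?gt_eqF.
rewrite normrM [X in _ * X]ger0_norm; last by rewrite invr_ge0 mulr_ge0 // ltW.
rewrite ler_pdivrMr ?mulr_gt0 //.
suff -> : level_avg S k * (a * b) = b * level_sum S k by [].
by rewrite /level_avg -/a; field; rewrite gt_eqF.
Qed.

End LevelStep.

Lemma window_telescope (R : comRingType) (F : nat -> R) n m : (m <= n)%N ->
  F n *+ m - F 0%N *+ m =
  \sum_(0 <= w < n) (F (minn (w + m) n) - F w) + \sum_(0 <= w < m) (F w - F 0%N).
Proof.
move=> le_mn; rewrite !sumrB sumr_const_nat subn0.
rewrite [in X in X - _ + _](big_cat_nat (leq0n (n - m)) (leq_subr m n)) /=.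
rewrite [\sum_(0 <= w < n) F w](big_cat_nat (leq0n m) le_mn) /=.
have -> : \sum_(0 <= w < n - m) F (minn (w + m) n) = \sum_(m <= w < n) F w.
  rewrite -[in RHS](add0n m) big_addn; apply: eq_big_nat => w /andP[_ lt_w].
  by congr F; apply/minn_idPl; move: lt_w; lia.
have -> : \sum_(n - m <= w < n) F (minn (w + m) n) = F n *+ m.
  rewrite -[X in _ = _ *+ X](subKn le_mn) -sumr_const_nat; apply: eq_big_nat => w /andP[le_w _].
  by congr F; apply/minn_idPr; move: le_w; lia.
ring.
Qed.

Lemma window_chain_le (R : realDomainType) (F A : nat -> R) n m : (m <= n)%N ->
  (forall k k', (k <= k' <= n)%N -> (k' - k <= m)%N -> `|F k' - F k| <= A k) ->
  m%:R * (F n - F 0%N) <= \sum_(0 <= w < n) A w + m%:R * A 0%N.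
Proof.
move=> le_mn F_step; rewrite mulrBr !mulr_natl window_telescope //.
rewrite -[m in A 0%N *+ m]subn0 -sumr_const_nat.
rewrite big_nat_cond [X in _ <= X + _]big_nat_cond.
rewrite [X in _ + X]big_nat_cond [X in _ <= _ + X]big_nat_cond.
apply: lerD; apply: ler_sum => w /andP[/andP[_ lt_w] _];
  apply: le_trans (ler_norm _) _; apply: F_step; move: lt_w le_mn; lia.
Qed.

Section Bernstein.
Variable R : comNzRingType.

Definition bernstein (N j : nat) : {poly R} :=
  ('C(N, j))%:R *: ('X^j * (1 - 'X) ^+ (N - j)).

Definition bernstein_cdf (N k : nat) : {poly R} := \sum_(j < k.+1) bernstein N j.

Lemma horner_bernstein N j (c : R) :
  (bernstein N j).[c] = ('C(N, j))%:R * (c ^+ j * (1 - c) ^+ (N - j)).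
Proof. by rewrite hornerZ hornerM hornerXn horner_exp !hornerE. Qed.

Lemma deriv_bernstein N j (c : R) : (j < N)%N ->
  (bernstein N.+1 j.+1)^`().[c] = N.+1%:R * ((bernstein N j).[c] - (bernstein N j.+1).[c]).
Proof.
move=> lt_jN; rewrite !horner_bernstein derivZ derivM derivXn deriv_exp !derivE.
rewrite !hornerE !hornerMn !hornerE /=.
have -> : (N.+1 - j.+1 = (N - j.+1).+1)%N by lia.
have -> : (N - j = (N - j.+1).+1)%N by lia.
have binS_diag : ('C(N.+1, j.+1) * j.+1)%:R = N.+1%:R * ('C(N, j))%:R :> R.
  by rewrite -!natrM mulnC -mul_bin_diag.
have binS_down : ('C(N.+1, j.+1) * (N - j.+1).+1)%:R = N.+1%:R * ('C(N, j.+1))%:R :> R.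
  have -> : ((N - j.+1).+1 = N.+1 - j.+1)%N by lia.
  by rewrite -!natrM mulnC -mul_bin_down.
rewrite !natrM in binS_diag binS_down.
rewrite /= !exprS; set A := c ^+ j; set B := (1 - c) ^+ (N - j.+1).
transitivity ('C(N.+1, j.+1)%:R * j.+1%:R * (A * (1 - c) * B) -
              'C(N.+1, j.+1)%:R * (N - j.+1).+1%:R * (c * A * B)); first by ring.
by rewrite binS_diag binS_down; ring.
Qed.

Lemma deriv_bernstein_cdf N k (c : R) : (k <= N)%N ->
  (bernstein_cdf N.+1 k)^`().[c] = - (N.+1%:R * (bernstein N k).[c]).
Proof.
elim: k => [|k IHk] le_kN.
  rewrite /bernstein_cdf big_ord1 /bernstein bin0 subn0 expr0 scale1r mul1r.
  by rewrite deriv_exp !derivE subn0 hornerMn !hornerE /=; ring.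
rewrite /bernstein_cdf big_ord_recr /= derivD hornerD -/(bernstein_cdf _ _).
by rewrite IHk 1?ltnW // deriv_bernstein //; ring.
Qed.

Lemma bernstein_cdf0 N k : (bernstein_cdf N k).[0] = 1.
Proof.
rewrite /bernstein_cdf horner_sum big_ord_recl big1 => [|j _].
  by rewrite horner_bernstein bin0 !expr0 subr0 expr1n !mul1r addr0.
by rewrite horner_bernstein expr0n /= mul0r mulr0.
Qed.

Lemma bernstein_cdf1 N k : (k < N)%N -> (bernstein_cdf N k).[1] = 0.
Proof.
move=> lt_kN; rewrite /bernstein_cdf horner_sum big1 // => j _.
by rewrite horner_bernstein subrr expr0n subn_eq0 leqNgt (leq_ltn_trans (leq_ord j)) ?mulr0.
Qed.

End Bernstein.

(* [bernstein n k] has integral [1 / n.+1] over [0, 1]; instead of integrating,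
   apply the mean value theorem to [sum_k a k *: bernstein_cdf n.+1 k], whose
   derivative is [- n.+1 * sum_k a k * bernstein n k]. *)
Lemma sum_le_bernstein_bound (R : rcfType) (a : nat -> R) n (s : R) :
  (forall c : R, 0 < c < 1 -> \sum_(k < n.+1) a k * (bernstein R n k).[c] <= s) ->
  \sum_(k < n.+1) a k <= n.+1%:R * s.
Proof.
move=> bernstein_le.
pose H : {poly R} := \sum_(k < n.+1) a k *: bernstein_cdf R n.+1 k.
have [c c01 mvt] := poly_mvt H (@ltr01 R).
have H1 : H.[1] = 0.
  by rewrite horner_sum big1 // => k _; rewrite hornerZ bernstein_cdf1 ?mulr0.
have H0 : H.[0] = \sum_(k < n.+1) a k.
  by rewrite horner_sum; apply: eq_bigr => k _; rewrite hornerZ bernstein_cdf0 mulr1.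
have H'c : H^`().[c] = - (n.+1%:R * \sum_(k < n.+1) a k * (bernstein R n k).[c]).
  rewrite raddf_sum horner_sum mulr_sumr -sumrN; apply: eq_bigr => k _.
  by rewrite /= derivZ hornerZ deriv_bernstein_cdf -1?ltnS //; ring.
move: mvt; rewrite H1 H0 H'c subr0 mulr1 sub0r => /oppr_inj ->.
by rewrite ler_pM2l ?ltr0n //; apply: bernstein_le; move: c01; rewrite in_itv.
Qed.

Section BernoulliExpectation.
Variables (R : realType) (n : nat).
Implicit Types (p : R) (x : cube n) (g : cube n -> R).

Lemma bern_mass_ge0 p x : 0 <= p <= 1 -> 0 <= bern_mass p x.
Proof. by case/andP=> p_ge0 p_le1; apply: prodr_ge0 => i _; case: (x i); rewrite ?subr_ge0. Qed.

Lemma bern_mass_le1 p x : 0 <= p <= 1 -> bern_mass p x <= 1.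
Proof.
case/andP=> p_ge0 p_le1; apply: prodr_ile1 => i _.
by case: (x i); rewrite ?subr_ge0 ?gerBl p_ge0 p_le1.
Qed.

Lemma bern_mass_cube_of_set p (X : {set 'I_n}) :
  bern_mass p (cube_of_set X) = p ^+ #|X| * (1 - p) ^+ (n - #|X|).
Proof.
rewrite /bern_mass (bigID (fun i => i \in X)) /=.
rewrite (eq_bigr (fun _ => p)) => [|i Xi]; last by rewrite ffunE Xi.
rewrite [X in _ * X](eq_bigr (fun _ => 1 - p)) => [|i /negbTE Xi]; last by rewrite ffunE Xi.
rewrite !prodr_const -[n in (n - _)%N]card_ord -(cardC X) addKn.
by congr (_ ^+ _ * _ ^+ _); apply: eq_card => i; rewrite !inE.
Qed.

Lemma bern_exp_levels p g :
  bern_exp p g =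
  \sum_(k < n.+1) p ^+ k * (1 - p) ^+ (n - k) * level_sum (g \o cube_of_set) k.
Proof.
rewrite /bern_exp (reindex _ (onW_bij _ (@cube_of_set_bij n))) sum_by_level.
apply: eq_bigr => k _; rewrite /level_sum mulr_sumr; apply: eq_bigr => X /eqP <-.
by rewrite bern_mass_cube_of_set.
Qed.

Lemma bern_mass_id (b : bool) x :
  bern_mass (b%:R : R) x = (x == [ffun=> b])%:R.
Proof.
have [-> | neq_x] := eqVneq x [ffun=> b].
  by apply: big1 => i _; rewrite ffunE; case: b; rewrite /= ?mulr0n ?mulr1n ?subr0.
have /existsP[i neq_xi] : [exists i, x i != b].
  apply: contraNT neq_x => /existsPn same_x.
  by apply/eqP/ffunP => i; rewrite ffunE; apply/eqP/negPn/same_x.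
rewrite /bern_mass (bigD1 i) //= {neq_x}.
by move: neq_xi; case: (x i); case: b; rewrite /= ?mulr0n ?mulr1n ?subrr ?subr0 ?mul0r.
Qed.

Lemma bern_exp_id (b : bool) g : bern_exp (b%:R : R) g = g [ffun=> b].
Proof.
rewrite /bern_exp (bigD1 [ffun=> b]) //= bern_mass_id eqxx mul1r big1 ?addr0 //.
by move=> x /negbTE neq_x; rewrite bern_mass_id neq_x mul0r.
Qed.

Lemma bern_exp0 g : bern_exp 0 g = g [ffun=> false].
Proof. exact: bern_exp_id false g. Qed.

Lemma bern_exp_le_sup_bern (G : R -> cube n -> R) M p : 0 <= p <= 1 ->
  (forall q x, 0 <= q <= 1 -> `|G q x| <= M) -> bern_exp p (G p) <= sup_bern G.
Proof.
move=> p01 G_le_M; apply: ub_le_sup; last by exists p.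
exists (\sum_(x : cube n) M) => _ [q q01 <-].
apply: ler_sum => x _; apply: le_trans (ler_norm _) _.
rewrite normrM ger0_norm ?bern_mass_ge0 // -[M]mul1r.
by apply: ler_pM; rewrite ?bern_mass_le1 ?bern_mass_ge0 ?G_le_M.
Qed.

Lemma bern_exp_bernstein p g :
  bern_exp p g = \sum_(k < n.+1) level_avg (g \o cube_of_set) k * (bernstein R n k).[p].
Proof.
rewrite bern_exp_levels; apply: eq_bigr => k _; rewrite horner_bernstein /level_avg.
have : ('C(n, k))%:R != 0 :> R by rewrite pnatr_eq0 -lt0n bin_gt0 -ltnS.
by move=> bin_neq0; field.
Qed.

End BernoulliExpectation.

Lemma Sens_ge (R : realType) n (f : cube n -> R) eta x y :
  (dH x y)%:Z <= Num.floor (eta * n%:R) -> `|f y - f x| <= Sens f eta x.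
Proof. exact: le_bigmax_cond. Qed.

Lemma level_chain_bound (R : realType) n m (f S : cube n -> R) s : (m <= n)%N ->
  (forall x y, (dH x y <= m)%N -> `|f y - f x| <= S x) ->
  (forall c : R, 0 <= c <= 1 -> bern_exp c S <= s) ->
  m%:R * (f [ffun=> true] - f [ffun=> false]) <= (n.+1 + m)%:R * s.
Proof.
move=> le_mn f_step S_le_s.
have S_ge0 x : 0 <= S x by apply: le_trans (f_step x x _); rewrite ?dH_refl // subrr normr0.
have set_step (X Y : {set 'I_n}) : X \subset Y -> (#|Y| - #|X| <= m)%N ->
    `|(f \o cube_of_set) Y - (f \o cube_of_set) X| <= (S \o cube_of_set) X.
  by move=> sXY window; apply: f_step; rewrite dH_cube_of_set.
have := window_chain_le le_mn (level_avg_step set_step).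
rewrite level_avgn level_avg0 /= cube_of_setT cube_of_set0 => chain.
have A0_le_s : level_avg (S \o cube_of_set) 0 <= s.
  by rewrite level_avg0 /= cube_of_set0 -bern_exp0 S_le_s // lexx ler01.
have A_sum_le : \sum_(k < n.+1) level_avg (S \o cube_of_set) k <= n.+1%:R * s.
  apply: sum_le_bernstein_bound => c /andP[c_gt0 c_lt1].
  by rewrite -bern_exp_bernstein S_le_s // !ltW.
have A_last_ge0 : 0 <= level_avg (S \o cube_of_set) n.
  by apply: divr_ge0; [apply: sumr_ge0 => X _; exact: S_ge0 | exact: ler0n].
apply: le_trans chain _; rewrite natrD mulrDl lerD ?ler_wpM2l //.
by apply: le_trans A_sum_le; rewrite big_mkord big_ord_recr lerDl.
Qed.

Lemma normr_le_sum_normr (I : finType) (R : numDomainType) (g : I -> R) i :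
  `|g i| <= \sum_j `|g j|.
Proof. by rewrite (bigD1 i) //= lerDl sumr_ge0. Qed.

Lemma endpoint_gap (R : realType) n (f : cube n -> R) :
  sup_bern (fun p x => `|f x - p|) <= 1 / 4 ->
  1 / 2 <= f [ffun=> true] - f [ffun=> false].
Proof.
move=> sup_le.
have dev_le (b : bool) : `|f [ffun=> b] - b%:R| <= 1 / 4.
  rewrite -(bern_exp_id b (fun x => `|f x - b%:R|)); apply: le_trans sup_le.
  apply: (bern_exp_le_sup_bern (M := \sum_y `|f y| + 1)) => [|q x /andP[q_ge0 q_le1]].
    by case: b; rewrite /= ?mulr0n ?mulr1n ?lexx ?ler01.
  rewrite normr_id (le_trans (ler_normB _ _)) // lerD ?normr_le_sum_normr //.
  by rewrite ger0_norm.
move: (dev_le true) (dev_le false); rewrite /= ?mulr0n ?mulr1n !ler_norml; lra.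
Qed.

Lemma div_sqrt_le_quarter (R : rcfType) (C : R) n :
  0 <= C -> 16 * C ^+ 2 < n%:R -> C / Num.sqrt n%:R <= 1 / 4.
Proof.
move=> C_ge0 n_large.
have sqrt_gt0 : 0 < Num.sqrt (n%:R : R).
  by rewrite sqrtr_gt0 (le_lt_trans _ n_large) // mulr_ge0 ?sqr_ge0.
have : 4 * C <= Num.sqrt n%:R.
  rewrite -[4 * C]ger0_norm ?mulr_ge0 // -sqrtr_sqr ler_wsqrtr // exprMn.
  by apply: ltW; rewrite [4 ^+ 2](_ : _ = 16 :> R) //; lra.
by rewrite ler_pdivrMr //; lra.
Qed.

Lemma rate_le_of_level_chain (R : realFieldType) (eta s : R) n m : (1 <= m <= n)%N ->
  eta * n%:R < m%:R + 1 -> m%:R * (1 / 2) <= (n.+1 + m)%:R * s -> 1 / 12 * eta <= s.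
Proof.
move=> /andP[m_ge1 le_mn]; rewrite natrD -[n.+1]addn1 natrD.
have : 1 <= m%:R :> R by rewrite ler1n.
have : m%:R <= n%:R :> R by rewrite ler_nat.
move: (m%:R) (n%:R) => M N M_le_N M_ge1 eta_lt chain.
have s_ge0 : 0 <= s by rewrite -(@pmulr_rge0 _ (N + 1 + M)); lra.
have : (N + 1 + M) * s <= (3 * N) * s by rewrite ler_wpM2r //; lra.
move=> /(le_trans chain) M_le; rewrite -(@ler_pM2r _ N); nra.
Qed.

Theorem theorem4p1 (R : realType) (CBern : R) (hC : 0 < CBern) :
  exists c : R, 0 < c /\
  exists N0 : nat, forall n : nat, (N0 <= n)%N ->
    forall f : cube n -> R,
      sup_bern (fun p x => `|f x - p|) <= CBern / Num.sqrt (n%:R) ->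
      forall eta : R, 0 < eta < 1 -> 1 <= Num.floor (eta * n%:R) ->
        c * eta <= sup_bern (fun _ x => Sens f eta x).
Proof.
exists (1 / 12); split; first by rewrite divr_gt0 ?ltr0n.
exists (Num.truncn (16 * CBern ^+ 2)).+1.
move=> n n_large f f_dev eta /andP[eta_gt0 eta_lt1] floor_ge1.
have gap : 1 / 2 <= f [ffun=> true] - f [ffun=> false].
  apply/endpoint_gap/(le_trans f_dev)/div_sqrt_le_quarter; first exact: ltW.
  by apply: lt_le_trans (truncnS_gt _) _; rewrite ler_nat.
have [m m_floor] : exists m : nat, m%:Z = Num.floor (eta * n%:R).
  by exists `|Num.floor (eta * n%:R)|%N; rewrite gez0_abs // (le_trans _ floor_ge1).
have m_le : m%:R <= eta * n%:R by have := floor_le (eta * n%:R); rewrite -m_floor.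
have lt_m1 : eta * n%:R < m%:R + 1.
  by have := floorD1_gt (eta * n%:R); rewrite -m_floor intrD.
have m_ge1 : (1 <= m)%N by rewrite -(lez_nat 1 m) m_floor.
have le_mn : (m <= n)%N.
  by rewrite -(ler_nat R) (le_trans m_le) // ler_piMl ?ler0n ?ltW.
apply: (rate_le_of_level_chain (n := n) (m := m)); rewrite ?m_ge1 //.
apply: le_trans (ler_wpM2l (ler0n _ _) gap) _.
apply: (level_chain_bound (S := Sens f eta) le_mn) => [x y|c c01].
  by rewrite -lez_nat m_floor => /Sens_ge.
apply: (bern_exp_le_sup_bern (M := \sum_y `|Sens f eta y|)) => // _ x _.
exact: normr_le_sum_normr.
Qed.
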